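(* Let $B$ be an integral domain containing $A$ as a subring, let $f:A\to B$ be $\mathbb{F}_q$-linear, let $d$ be a non-negative integer, and let $\beta$ be a non-negative integer with base-$q$ expansion $\beta=\sum_{i=0}^e\beta_iq^i$ ($0\le\beta_i\le q-1$) such that $l(\beta)<q$. Then, in $\mathrm{Frac}(B)[z]$, $$M_d(f^\beta)(z)=M_d(1)^{1-l(\beta)}\prod_{i=0}^e\left(M_d(f^{q^i})(z)\right)^{\beta_i}.$$
   Context: $q$ is a power of a prime, $A=\mathbb{F}_q[\theta]$, $A_+(d)$ is the set of monic polynomials of degree $d$ in $A$. For a function $g:A\to B$, $M_d(g)(z):=\sum_{b\in A_+(d)} g(b)\prod_{a\in A_+(d)\setminus\{b\}}(z-a)\in B[z]$; $f^{m}$ denotes the function $a\mapsto f(a)^m$ (with $f^0=1$). $M_d(1)$ denotes $M_d$ applied to the constant function $1$; it is the nonzero constant $(-1)^dD_d/L_d\in A$, where $D_d$ is the product of all monic polynomials of degree $d$ and $L_d$ the lcm of all polynomials of degree $d$. $l(\beta):=\sum_i\beta_i$ is the sum of base-$q$ digits. *)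

From HB Require Import structures.
From mathcomp Require Import all_boot all_order all_algebra all_field.
Set Implicit Arguments. Unset Strict Implicit. Unset Printing Implicit Defensive.
Import GRing.Theory.
Local Open Scope ring_scope.

(* A = F[theta] is modelled as {poly F} for F : finFieldType, q = #|F|. *)

Definition monics (F : finFieldType) (d : nat) : seq {poly F} :=
  [seq 'X^d + \sum_(i < d) (c i)%:P * 'X^i | c : {ffun 'I_d -> F}].

Definition Md (F : finFieldType) (R : comRingType) (iota : {poly F} -> R)
    (d : nat) (g : {poly F} -> R) : {poly R} :=
  \sum_(b <- monics F d)
     g b *: \prod_(a <- monics F d | a != b) ('X - (iota a)%:P).

(* i-th base-q digit of beta, and the base-q digit sum l(beta). Digits with
   index > beta vanish (q >= 2), so indices i < beta.+1 cover the expansion. *)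
Definition digit (q beta i : nat) : nat := (beta %/ q ^ i) %% q.
Definition lsum (q beta : nat) : nat := \sum_(i < beta.+1) digit q beta i.

From HB Require Import structures.
From mathcomp Require Import all_boot all_order all_algebra all_field.
From mathcomp Require Import pgroup abelian zify.
Set Implicit Arguments. Unset Strict Implicit. Unset Printing Implicit Defensive.
Import GRing.Theory.
Local Open Scope ring_scope.

(* For an F_q-linear g, the value of M_d(g) at a monic b of degree d is g(b) times a
   nonzero constant kappa = prod_{a <> b} (b - a), independent of b. On the monics, g is
   an affine function of the coefficients of b; so are the Frobenius powers b^(q^j), and
   1, b, b^q, ..., b^(q^(d-1)) are linearly independent, hence span the (d+1)-dimensional
   space of affine functions. Interpolating, M_d(g) has degree at most q^(d-1). After
   multiplication by kappa^l(beta), both sides of the identity therefore have degree at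
   most l(beta) q^(d-1) < q^d and take the same value kappa^(l(beta)+1) f(b)^beta at each
   of the q^d monics b, so they are equal. *)

Section Monics.
Variables (F : finFieldType) (d : nat).
Local Notation T := {ffun 'I_d -> F}.

Definition lower_poly (c : T) : {poly F} := \sum_(i < d) (c i)%:P * 'X^i.
Definition monic_of (c : T) : {poly F} := 'X^d + lower_poly c.

Lemma monicsE : monics F d = map monic_of (enum T).
Proof. by []. Qed.

Lemma coef_lower_poly c (i : 'I_d) : (lower_poly c)`_i = c i.
Proof.
rewrite /lower_poly coef_sum (bigD1 i) //= coefCM coefXn eqxx mulr1 big1 ?addr0 //.
by move=> j ji; rewrite coefCM coefXn val_eqE eq_sym (negbTE ji) mulr0.
Qed.

Lemma coef_monic_of c (i : 'I_d) : (monic_of c)`_i = c i.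
Proof. by rewrite coefD coefXn ltn_eqF // add0r coef_lower_poly. Qed.

Lemma monic_of_inj : injective monic_of.
Proof. by move=> c c' eq_cc'; apply/ffunP => i; rewrite -!coef_monic_of eq_cc'. Qed.

Lemma monic_ofB c c' : monic_of c - monic_of c' = lower_poly (c - c').
Proof.
rewrite opprD addrACA subrr add0r /lower_poly -sumrB.
by apply: eq_bigr => i _; rewrite !ffunE polyCB mulrBl.
Qed.

Lemma uniq_monics : uniq (monics F d).
Proof. by rewrite monicsE (map_inj_uniq monic_of_inj) enum_uniq. Qed.

Lemma size_monics : size (monics F d) = (#|F| ^ d)%N.
Proof. by rewrite monicsE size_map -cardE card_ffun card_ord. Qed.

End Monics.

Section MdBasics.
Variables (F : finFieldType) (R : comNzRingType) (io : {poly F} -> R) (d : nat).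
Local Notation S := (monics F d).

Lemma eq_Md (g g' : {poly F} -> R) : g =1 g' -> Md io d g = Md io d g'.
Proof. by move=> eq_g; apply: eq_bigr => b _; rewrite eq_g. Qed.

Definition Md_weight (b : {poly F}) : R := \prod_(a <- S | a != b) (io b - io a).

Lemma horner_Md g b : b \in S -> (Md io d g).[io b] = g b * Md_weight b.
Proof.
move=> bS; rewrite /Md horner_sum (bigD1_seq b) ?uniq_monics //= [X in _ + X]big1 ?addr0.
  by rewrite hornerZ horner_prod; congr (_ * _); apply: eq_bigr => a _; rewrite hornerXsubC.
move=> b' b'b; rewrite hornerZ horner_prod big_mkcond (bigD1_seq b) ?uniq_monics //=.
by rewrite eq_sym b'b hornerXsubC subrr mul0r mulr0.
Qed.

Lemma size_Md g : (size (Md io d g) <= #|F| ^ d)%N.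
Proof.
apply: (leq_trans (size_sum _ _ _)); apply/bigmax_leqP_seq => b bS _.
apply: (leq_trans (size_scale_leq _ _)).
rewrite -big_filter size_prod_XsubC -rem_filter ?uniq_monics // size_rem //.
by rewrite -size_monics prednK //; case: (monics F d) bS.
Qed.

Lemma map_Md (R' : comNzRingType) (phi : {rmorphism R -> R'}) g :
  map_poly phi (Md io d g) = Md (phi \o io) d (phi \o g).
Proof.
rewrite /Md rmorph_sum; apply: eq_bigr => b _.
rewrite /= map_polyZ rmorph_prod; congr (_ *: _); apply: eq_bigr => a _.
by rewrite /= map_polyXsubC.
Qed.

End MdBasics.

Section MdDomain.
Variables (F : finFieldType) (R : idomainType) (io : {rmorphism {poly F} -> R}).
Hypothesis io_inj : injective io.
Variable d : nat.
Local Notation S := (monics F d).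

Lemma poly_eq_on_monics (p r : {poly R}) :
  (size p <= #|F| ^ d)%N -> (size r <= #|F| ^ d)%N ->
  {in S, forall b, p.[io b] = r.[io b]} -> p = r.
Proof.
move=> sp sr eq_pr; apply/eqP; rewrite -subr_eq0; apply: contraTT isT => nz.
have := max_poly_roots nz (rs := map io S).
rewrite size_map size_monics (map_inj_uniq io_inj) uniq_monics.
have -> : all (root (p - r)) (map io S).
  by apply/allP => _ /mapP [b bS ->]; rewrite rootE hornerD hornerN eq_pr // subrr.
move=> /(_ isT isT); rewrite ltnNge; apply: contraNN => _.
by apply: leq_trans (size_polyD _ _) _; rewrite geq_max size_polyN sp sr.
Qed.

Definition lower_prod : R := \prod_(c : {ffun 'I_d -> F} | c != 0) io (lower_poly c).

Lemma Md_weightE b : b \in S -> Md_weight io d b = lower_prod.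
Proof.
rewrite monicsE => /mapP [c0 _ ->].
rewrite /Md_weight big_map big_enum_cond /lower_prod (reindex_inj (subrI c0)) /=.
apply: eq_big => c; last by move=> _; rewrite -rmorphB monic_ofB opprB addrC subrK.
by rewrite (inj_eq (@monic_of_inj _ _)) -subr_eq0 addrAC subrr add0r oppr_eq0.
Qed.

Lemma lower_prod_neq0 : lower_prod != 0.
Proof.
apply/prodf_neq0 => c; apply: contraNN => /eqP; rewrite -(rmorph0 io) => /io_inj lc.
by apply/eqP/ffunP => i; rewrite -coef_lower_poly lc coef0 ffunE.
Qed.

Lemma Md_cst1 : Md io d (fun=> 1) = lower_prod%:P.
Proof.
apply: poly_eq_on_monics; first exact: size_Md.
  by rewrite (leq_trans (size_polyC_leq1 _)) // expn_gt0 ltnW // finNzRing_gt1.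
by move=> b bS; rewrite horner_Md // Md_weightE // hornerC mul1r.
Qed.

End MdDomain.

Section FqLinear.
Variables (F : finFieldType) (R : idomainType) (io : {rmorphism {poly F} -> R}).
Local Notation q := #|F|.

Definition Fq_linear (h : {poly F} -> R) :=
  forall (c : F) (a b : {poly F}), h (c *: a + b) = io c%:P * h a + h b.

Lemma pchar_nat_card : [pchar R].-nat q.
Proof.
have [p p_pr pcharFp] := finPcharP F.
have pcharRp : p \in [pchar R].
  by apply: (rmorph_pchar io); apply: (rmorph_pchar (@polyC F)).
have := abelem_pgroup (fin_ring_pchar_abelem pcharFp).
by rewrite /pgroup cardsT (eq_pnat _ (pcharf_eq pcharRp)).
Qed.

Lemma frobeniusD i (x y : R) : (x + y) ^+ (q ^ i) = x ^+ (q ^ i) + y ^+ (q ^ i).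
Proof. by apply: exprDn_pchar; rewrite pnatX pchar_nat_card. Qed.

Lemma frobenius_const i (c : F) : io c%:P ^+ (q ^ i) = io c%:P.
Proof.
rewrite -rmorphXn -polyC_exp; congr (io _%:P).
by elim: i => [|i IH]; rewrite ?expr1 // expnS exprM expf_card IH.
Qed.

Lemma Fq_linear_rmorph : Fq_linear io.
Proof. by move=> c a b; rewrite rmorphD -mul_polyC rmorphM. Qed.

Lemma Fq_linear_frobenius h i : Fq_linear h -> Fq_linear (fun a => h a ^+ (q ^ i)).
Proof. by move=> h_lin c a b /=; rewrite h_lin frobeniusD exprMn frobenius_const. Qed.

Lemma Fq_linear_monic_of h : Fq_linear h -> forall d (c : {ffun 'I_d -> F}),
  h (monic_of c) = h 'X^d + \sum_(k < d) io (c k)%:P * h 'X^k.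
Proof.
move=> h_lin d c; rewrite /monic_of /lower_poly addrC.
under eq_bigr do rewrite mul_polyC.
elim/big_rec2: _ => [|k y1 y2 _ IH]; first by rewrite add0r addr0.
by rewrite -addrA h_lin IH addrCA.
Qed.

End FqLinear.

Lemma ltn_mul_expn_div (q l n : nat) : (l < q)%N -> (l * (q ^ n %/ q) < q ^ n)%N.
Proof.
move=> lq; have q_gt0 : (0 < q)%N by apply: leq_ltn_trans lq.
have [->|e_gt0] := posnP (q ^ n %/ q); first by rewrite muln0 expn_gt0 q_gt0.
by apply: leq_trans (leq_trunc_div _ q); rewrite [X in (_ < X)%N]mulnC ltn_pmul2r.
Qed.

Section Interpolation.
Variables (F : finFieldType) (K : fieldType) (io : {rmorphism {poly F} -> K}).
Hypothesis io_inj : injective io.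
Variable d : nat.
Local Notation T := {ffun 'I_d -> F}.
Local Notation q := #|F|.
(* q^(d-1) for d > 0, and 0 for d = 0 where M_d(g) is the constant g(1) *)
Local Notation e := (q ^ d %/ q)%N.

Let q_gt1 : (1 < q)%N. Proof. exact: finNzRing_gt1. Qed.

Let e_lt : (e < q ^ d)%N.
Proof. by rewrite -[X in (X < _)%N]mul1n ltn_mul_expn_div. Qed.

Definition frob_exp (i : nat) : nat := if i is j.+1 then q ^ j else 0.

Lemma frob_exp_inj : injective frob_exp.
Proof.
have q_pos j : (q ^ j)%N != 0%N by rewrite -lt0n expn_gt0 ltnW.
case=> [|i] [|j] //= => [/esym/eqP|/eqP|/(expnI q_gt1) ->] //.
  by rewrite (negbTE (q_pos j)).
by rewrite (negbTE (q_pos i)).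
Qed.

Lemma frob_exp_le i : (i <= d)%N -> (frob_exp i <= e)%N.
Proof.
case: i => [|j] //= jd.
by rewrite -(mulnK (q ^ j) (ltnW q_gt1)) -expnSr leq_div2r // leq_pexp2l // (ltnW q_gt1).
Qed.

Lemma size_frob_comb (k : 'I_d.+1 -> K) :
  (size (\sum_(i < d.+1) k i *: 'X^(frob_exp i))%R <= e.+1)%N.
Proof.
apply: leq_trans (size_sum _ _ _) _; apply/bigmax_leqP => i _.
by apply: leq_trans (size_scale_leq _ _) _; rewrite size_polyXn ltnS frob_exp_le // -ltnS.
Qed.

Definition eval_monics (p : {poly K}) : {ffun T -> K^o} := [ffun c => p.[io (monic_of c)]].

Definition frob_evals : (d.+1).-tuple {ffun T -> K^o} :=
  [tuple eval_monics 'X^(frob_exp i) | i < d.+1].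

Definition const1_fn : {ffun T -> K^o} := [ffun=> 1].
Definition coef_fn (k : 'I_d) : {ffun T -> K^o} := [ffun c : T => io (c k)%:P].
Definition affine_fns : seq {ffun T -> K^o} := const1_fn :: map coef_fn (enum 'I_d).

Lemma eval_monics_comb (k : 'I_d.+1 -> K) :
  eval_monics (\sum_i k i *: 'X^(frob_exp i)) = \sum_i k i *: frob_evals`_i.
Proof.
apply/ffunP => c; rewrite ffunE horner_sum sum_ffunE; apply: eq_bigr => i _.
by rewrite -tnth_nth tnth_mktuple !ffunE hornerZ.
Qed.

Lemma Fq_linear_in_affine h :
  Fq_linear io h -> [ffun c => h (monic_of c)] \in <<affine_fns>>%VS.
Proof.
move=> h_lin; have -> : [ffun c => h (monic_of c)] =
    h 'X^d *: const1_fn + \sum_(k < d) h 'X^k *: coef_fn k.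
  apply/ffunP => c; rewrite [LHS]ffunE (Fq_linear_monic_of h_lin) !ffunE sum_ffunE.
  congr (_ + _); first exact/esym/mulr1.
  by apply: eq_bigr => k _; rewrite !ffunE mulrC.
apply: memvD; first exact/memvZ/memv_span/mem_head.
apply: memv_suml => k _; apply/memvZ/memv_span.
by rewrite inE map_f ?orbT ?mem_enum.
Qed.

Lemma frob_evals_in_affine : {subset frob_evals <= <<affine_fns>>%VS}.
Proof.
move=> _ /mapP [[[|j] ?] _ ->] /=.
  have -> : eval_monics 'X^0 = const1_fn by apply/ffunP => c; rewrite !ffunE hornerC.
  by rewrite memv_span ?mem_head.
have -> : eval_monics 'X^(q ^ j) = [ffun c => io (monic_of c) ^+ (q ^ j)].
  by apply/ffunP => c; rewrite !ffunE hornerXn.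
exact: Fq_linear_in_affine (Fq_linear_frobenius j (Fq_linear_rmorph io)).
Qed.

Lemma free_frob_evals : free frob_evals.
Proof.
apply/freeP => k; rewrite -eval_monics_comb => comb0 i.
have P0 : \sum_(i < d.+1) k i *: 'X^(frob_exp i) = 0.
  apply: (poly_eq_on_monics io_inj); last 2 first.
  - by rewrite size_poly0.
  - rewrite monicsE => _ /mapP [c _ ->].
    by move/ffunP: comb0 => /(_ c); rewrite !ffunE horner0.
  exact: leq_trans (size_frob_comb k) e_lt.
have := congr1 (fun p : {poly K} => p`_(frob_exp i)) P0.
rewrite coef0 coef_sum (bigD1 i) //= coefZ coefXn eqxx mulr1 big1 ?addr0 // => j ji.
by rewrite coefZ coefXn (inj_eq frob_exp_inj) val_eqE eq_sym (negbTE ji) mulr0.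
Qed.

Lemma span_frob_evals : <<frob_evals>>%VS = <<affine_fns>>%VS.
Proof.
apply/eqP; rewrite eqEdim (introT span_subvP frob_evals_in_affine) (eqP free_frob_evals).
by rewrite size_tuple (leq_trans (dim_span _)) //= size_map size_enum_ord.
Qed.

Lemma Fq_linear_interpolation h : Fq_linear io h ->
  exists2 Q : {poly K}, (size Q <= e.+1)%N & {in monics F d, forall b, Q.[io b] = h b}.
Proof.
move=> /Fq_linear_in_affine; rewrite -span_frob_evals => /coord_span h_eq.
exists (\sum_i coord frob_evals i [ffun c => h (monic_of c)] *: 'X^(frob_exp i)).
  exact: size_frob_comb.
rewrite monicsE => _ /mapP [c _ ->]; rewrite -eval_monics_comb in h_eq.
by move/ffunP: h_eq => /(_ c); rewrite !ffunE => ->.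
Qed.

Lemma size_Md_Fq_linear g : Fq_linear io g -> (size (Md io d g) <= e.+1)%N.
Proof.
move=> /Fq_linear_interpolation [Q sQ hQ].
suff -> : Md io d g = lower_prod io d *: Q by apply: leq_trans (size_scale_leq _ _) sQ.
apply: (poly_eq_on_monics io_inj); first exact: size_Md.
  exact: leq_trans (size_scale_leq _ _) (leq_trans sQ e_lt).
by move=> b bS; rewrite horner_Md // Md_weightE // hornerZ hQ // mulrC.
Qed.

End Interpolation.

Section Digits.
Local Open Scope nat_scope.

Lemma sum_digits_mod (q b n : nat) : \sum_(i < n) digit q b i * q ^ i = b %% q ^ n.
Proof.
elim: n => [|n IH]; first by rewrite big_ord0 expn0 modn1.
rewrite big_ord_recr /= IH /digit modn_divl -expnS.
by rewrite -(modn_dvdm b (dvdn_exp2l q (leqnSn n))) addnC -divn_eq.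
Qed.

Lemma sum_digits (q b : nat) : 1 < q -> \sum_(i < b.+1) digit q b i * q ^ i = b.
Proof.
move=> q_gt1; rewrite sum_digits_mod modn_small //.
by rewrite (leq_trans (ltn_expl b q_gt1)) // leq_pexp2l // ltnW.
Qed.

End Digits.

Lemma size_prod_expn_leq (R : nzSemiRingType) (I : Type) (r : seq I)
    (p : I -> {poly R}) (k : I -> nat) (n : nat) :
  (forall i, size (p i) <= n.+1)%N ->
  (size (\prod_(i <- r) p i ^+ k i)%R <= (\sum_(i <- r) k i * n).+1)%N.
Proof.
move=> size_p; elim: r => [|i r IH]; first by rewrite !big_nil size_poly1.
rewrite !big_cons; apply: leq_trans (size_polyMleq _ _) _.
have := size_poly_exp_leq (p i) (k i); have := size_p i.
move: (size (p i)) (size (p i ^+ k i)) (size _) IH => a b c; nia.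
Qed.

Section MainIdentity.
Variables (F : finFieldType) (K : fieldType) (io : {rmorphism {poly F} -> K}).
Hypothesis io_inj : injective io.
Variables (d : nat) (f : {poly F} -> K).
Hypothesis f_lin : Fq_linear io f.
Local Notation q := #|F|.
Local Notation kappa := (lower_prod io d).

Lemma Md_expn_scaled beta : (lsum q beta < q)%N ->
  kappa ^+ lsum q beta *: Md io d (fun a => f a ^+ beta) =
  kappa *: \prod_(i < beta.+1) Md io d (fun a => f a ^+ (q ^ i)) ^+ digit q beta i.
Proof.
move=> l_lt_q; apply: (poly_eq_on_monics io_inj).
- exact: leq_trans (size_scale_leq _ _) (size_Md _ _ _).
- apply: leq_trans (size_scale_leq _ _) _.
  apply: leq_trans (size_prod_expn_leq _ _
    (fun i : 'I_beta.+1 => size_Md_Fq_linear io_inj d (Fq_linear_frobenius i f_lin))) _.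
  by rewrite -big_distrl ltn_mul_expn_div.
move=> b bS; rewrite !hornerZ horner_Md // Md_weightE // horner_prod.
under eq_bigr do rewrite horner_exp horner_Md // Md_weightE // exprMn -exprM mulnC.
rewrite big_split /= !prodrXr sum_digits ?finNzRing_gt1 // -/(lsum q beta).
by rewrite mulrCA [RHS]mulrCA; congr (_ * _); apply: mulrC.
Qed.

Lemma Md_expn beta : (lsum q beta < q)%N ->
  Md io d (fun a => f a ^+ beta) =
    Md io d (fun=> 1) ^ (1 - (lsum q beta)%:Z)
    * \prod_(i < beta.+1) Md io d (fun a => f a ^+ (q ^ i)) ^+ digit q beta i.
Proof.
move=> l_lt_q; have kappa_neq0 := lower_prod_neq0 io_inj d.
apply: (scalerI (expf_neq0 (lsum q beta) kappa_neq0)); rewrite Md_expn_scaled //.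
rewrite Md_cst1 // -rmorphXz ?unitfE // mul_polyC scalerA exprnP -expfzDr //.
by rewrite addrCA subrr addr0 expr1z.
Qed.

End MainIdentity.

Theorem corollary4p1p14 (F : finFieldType) (B : idomainType)
  (iota : {rmorphism {poly F} -> B}) (iota_inj : injective iota)
  (f : {poly F} -> B)
  (f_lin : forall (c : F) (a b : {poly F}), f (c *: a + b) = iota c%:P * f a + f b)
  (d beta : nat) (hl : (lsum #|F| beta < #|F|)%N) :
  map_poly (@tofrac B) (Md iota d (fun a => f a ^+ beta)) =
    (map_poly (@tofrac B) (Md iota d (fun _ => 1))) ^ (1 - (lsum #|F| beta)%:Z)
    * \prod_(i < beta.+1)
        (map_poly (@tofrac B) (Md iota d (fun a => f a ^+ (#|F| ^ i))))
          ^+ digit #|F| beta i.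
Proof.
pose io : {rmorphism {poly F} -> {fraction B}} := @tofrac B \o iota.
have io_inj : injective io by move=> x y /eqP; rewrite tofrac_eq => /eqP /iota_inj.
have frac_f_lin : Fq_linear io (@tofrac B \o f).
  by move=> c a b; rewrite /= f_lin rmorphD rmorphM.
have frac_expr n : @tofrac B \o (fun a => f a ^+ n) =1 (fun a => (@tofrac B \o f) a ^+ n).
  by move=> a; apply: rmorphXn.
rewrite !map_Md (eq_Md _ _ (frac_expr beta)) (Md_expn io_inj d frac_f_lin hl).
rewrite (eq_Md _ _ (g' := fun=> 1)) => [|a]; last exact: rmorph1.
by congr (_ * _); apply: eq_bigr => i _; rewrite map_Md (eq_Md _ _ (frac_expr _)).
Qed.
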